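(* Let $(\mathcal{B}_1,\mathcal{B}_0)$ be a Rota-Baxter operator on a crossed module of Lie groups $(H,G,t,\Phi)$ and let $\mathcal{C}$ be the small category associated with $(H,G,t,\Phi)$. Define $\mathcal{B}:G\times H\to G\times H$ by $$\mathcal{B}(a,p)=\Big(\mathcal{B}_0(a),\ \Phi(\mathcal{B}_0(a))\,\mathcal{B}_1\big(\Phi(\mathcal{B}_0(a)^{-1}a^{-1})p\big)\Big).$$ Then $F=(\mathcal{B},\mathcal{B}_0)$, acting by $\mathcal{B}_0$ on objects and by $\mathcal{B}$ on morphisms, is a functor from $\mathcal{C}$ to $\mathcal{C}$.
   Context: A crossed module of Lie groups is a quadruple $(H,G,t,\Phi)$ where $H,G$ are Lie groups, $t:H\to G$ is a Lie group homomorphism and $\Phi:G\to\mathrm{Aut}(H)$ is a smooth action of $G$ on $H$ by automorphisms such that $\Phi(t(p))q=pqp^{-1}$ and $t(\Phi(a)p)=a\,t(p)\,a^{-1}$ for all $p,q\in H$, $a\in G$. A Rota-Baxter operator on a Lie group $G$ is a smooth map $\mathcal{B}:G\to G$ with $\mathcal{B}(a)\mathcal{B}(b)=\mathcal{B}(a\mathcal{B}(a)b\mathcal{B}(a)^{-1})$ for all $a,b\in G$. A Rota-Baxter operator on a crossed module of Lie groups $(H,G,t,\Phi)$ is a pair $(\mathcal{B}_1,\mathcal{B}_0)$ of smooth maps $\mathcal{B}_1:H\to H$, $\mathcal{B}_0:G\to G$ such that (i) $\mathcal{B}_1,\mathcal{B}_0$ are Rota-Baxter operators on $H$, $G$; (ii)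 $t\circ\mathcal{B}_1=\mathcal{B}_0\circ t$; (iii) $\Phi(\mathcal{B}_0(a))\mathcal{B}_1(p)=\mathcal{B}_1\big(\Phi(a\mathcal{B}_0(a))(p\mathcal{B}_1(p))\cdot\Phi(\mathcal{B}_0(a))\mathcal{B}_1(p)^{-1}\big)$ for all $a\in G,p\in H$. The small category $\mathcal{C}$ associated with $(H,G,t,\Phi)$: objects $\mathcal{C}_0=G$, morphisms $\mathcal{C}_1=G\times H$, source $\mathfrak{s}(a,p)=a$, target $\mathfrak{t}(a,p)=t(p)a$, composition $(a,p)\circ(b,q)=(b,pq)$ whenever $t(q)b=a$, identities $1_a=(a,e_H)$. *)

(* Lie groups are not available; we work with abstract groups. *)
Set Implicit Arguments.

Record group := Group {
  carrier :> Type;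
  gmul : carrier -> carrier -> carrier;
  ginv : carrier -> carrier;
  gone : carrier;
  gmulA : forall x y z, gmul x (gmul y z) = gmul (gmul x y) z;
  gmul1l : forall x, gmul gone x = x;
  gmul1r : forall x, gmul x gone = x;
  gmulVl : forall x, gmul (ginv x) x = gone;
  gmulVr : forall x, gmul x (ginv x) = gone
}.

Arguments gmul {g}.
Arguments ginv {g}.
Arguments gone {g}.

Definition is_hom {H G : group} (f : H -> G) : Prop :=
  forall p q : H, f (gmul p q) = gmul (f p) (f q).

Definition is_aut {H : group} (f : H -> H) : Prop :=
  is_hom f /\ (exists g : H -> H, (forall p, g (f p) = p) /\ (forall p, f (g p) = p)).

Definition crossed_module {H G : group} (t : H -> G) (Phi : G -> H -> H) : Prop :=
  is_hom t /\
  (forall a : G, is_aut (Phi a)) /\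
  (forall (a b : G) (p : H), Phi (gmul a b) p = Phi a (Phi b p)) /\
  (forall p : H, Phi gone p = p) /\
  (forall p q : H, Phi (t p) q = gmul (gmul p q) (ginv p)) /\
  (forall (a : G) (p : H), t (Phi a p) = gmul (gmul a (t p)) (ginv a)).

Definition rota_baxter {G : group} (B : G -> G) : Prop :=
  forall a b : G, gmul (B a) (B b) = B (gmul (gmul a (gmul (B a) b)) (ginv (B a))).

Definition rota_baxter_cm {H G : group} (t : H -> G) (Phi : G -> H -> H)
  (B1 : H -> H) (B0 : G -> G) : Prop :=
  rota_baxter B1 /\ rota_baxter B0 /\
  (forall p : H, t (B1 p) = B0 (t p)) /\
  (forall (a : G) (p : H),
     Phi (B0 a) (B1 p) =
     B1 (gmul (Phi (gmul a (B0 a)) (gmul p (B1 p))) (ginv (Phi (B0 a) (B1 p))))).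

(** The small category C associated with (H, G, t, Phi):
    objects G, morphisms G * H. *)
Definition cat_src {H G : group} (t : H -> G) (f : G * H) : G := fst f.
Definition cat_tgt {H G : group} (t : H -> G) (f : G * H) : G := gmul (t (snd f)) (fst f).
Definition cat_composable {H G : group} (t : H -> G) (f g : G * H) : Prop :=
  gmul (t (snd g)) (fst g) = fst f.
Definition cat_comp {H G : group} (f g : G * H) : G * H := (fst g, gmul (snd f) (snd g)).
Definition cat_id (H : group) {G : group} (a : G) : G * H := (a, @gone H).

Definition is_functor_C {H G : group} (t : H -> G) (F0 : G -> G) (F1 : G * H -> G * H) : Prop :=
  (forall f, cat_src t (F1 f) = F0 (cat_src t f)) /\
  (forall f, cat_tgt t (F1 f) = F0 (cat_tgt t f)) /\
  (forall a : G, F1 (cat_id H a) = cat_id H (F0 a)) /\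
  (forall f g, cat_composable t f g ->
     cat_composable t (F1 f) (F1 g) /\ F1 (cat_comp f g) = cat_comp (F1 f) (F1 g)).

Definition B_mor {H G : group} (Phi : G -> H -> H) (B1 : H -> H) (B0 : G -> G)
  (f : G * H) : G * H :=
  let a := fst f in let p := snd f in
  (B0 a, Phi (B0 a) (B1 (Phi (gmul (ginv (B0 a)) (ginv a)) p))).

(* The target of B(a,p) is B0(a) t(B1 p') with p' := Phi((a B0 a)^-1) p, and
   the Rota-Baxter identity, read as B(y x) = B(x) B((x B x)^-1 y (x B x)),
   turns this into B0(t(p) a).  The same identity, now for B1, gives
   functoriality: writing q' := Phi((b B0 b)^-1) q, the object t(q) b is sent to
   B0(b) t(B1 q'), and B1(Phi((b B0 b)^-1) p * q') splits as
   B1(q') B1(Phi((t(q) b B0(t(q) b))^-1) p). *)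

Section GroupTheory.
Variable G : group.
Implicit Types x y z : G.

Lemma mulKVg x y : gmul x (gmul (ginv x) y) = y.
Proof. rewrite gmulA, gmulVr, gmul1l; reflexivity. Qed.

Lemma mulKg x y : gmul (ginv x) (gmul x y) = y.
Proof. rewrite gmulA, gmulVl, gmul1l; reflexivity. Qed.

Lemma mulgI x y z : gmul x y = gmul x z -> y = z.
Proof. intro E. rewrite <- (mulKg x y), E, mulKg; reflexivity. Qed.

Lemma invg_unique x y : gmul x y = gone -> ginv x = y.
Proof. intro E. apply (mulgI x). rewrite gmulVr, E; reflexivity. Qed.

Lemma invMg x y : ginv (gmul x y) = gmul (ginv y) (ginv x).
Proof. apply invg_unique. rewrite <- gmulA, mulKVg, gmulVr; reflexivity. Qed.

Lemma invgK x : ginv (ginv x) = x.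
Proof. apply invg_unique, gmulVl. Qed.

Lemma invg1 : ginv (@gone G) = gone.
Proof. apply invg_unique, gmul1l. Qed.

End GroupTheory.

Arguments mulgI {G}.

(* Normal form: right-associated products with inverses pushed to the letters. *)
Ltac group_simpl := repeat (rewrite ?invMg, ?invgK, ?invg1;
  repeat rewrite <- gmulA; rewrite ?mulKVg, ?mulKg, ?gmul1l, ?gmul1r, ?gmulVl, ?gmulVr).

Lemma hom1 (H G : group) (f : H -> G) : is_hom f -> f gone = gone.
Proof. intro fM. apply (mulgI (f gone)). rewrite <- fM, !gmul1r; reflexivity. Qed.

Lemma homV (H G : group) (f : H -> G) (x : H) : is_hom f -> f (ginv x) = ginv (f x).
Proof.
  intro fM. symmetry. apply invg_unique.
  rewrite <- fM, gmulVr. apply hom1, fM.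
Qed.

Arguments hom1 {H G f}.
Arguments homV {H G f x}.

Section RotaBaxter.
Variables (G : group) (B : G -> G).
Hypothesis B_rb : rota_baxter B.

Lemma rota_baxter1 : B gone = gone.
Proof. apply (mulgI (B gone)). rewrite B_rb. group_simpl. reflexivity. Qed.

Lemma rota_baxter_mulr (x y : G) :
  B (gmul y x) = gmul (B x) (B (gmul (ginv (gmul x (B x))) (gmul y (gmul x (B x))))).
Proof. rewrite B_rb. f_equal. group_simpl. reflexivity. Qed.

End RotaBaxter.

Arguments rota_baxter1 {G B}.
Arguments rota_baxter_mulr {G B}.

Section CrossedModuleRotaBaxter.
Variables (H G : group) (t : H -> G) (Phi : G -> H -> H) (B1 : H -> H) (B0 : G -> G).
Hypotheses (t_hom : is_hom t) (Phi_hom : forall a, is_hom (Phi a))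
  (PhiM : forall a b p, Phi (gmul a b) p = Phi a (Phi b p))
  (Phi_t : forall p q, Phi (t p) q = gmul (gmul p q) (ginv p))
  (t_Phi : forall a p, t (Phi a p) = gmul (gmul a (t p)) (ginv a)).
Hypotheses (B1_rb : rota_baxter B1) (B0_rb : rota_baxter B0)
  (t_B1 : forall p, t (B1 p) = B0 (t p)).

Let twist (a : G) : G := ginv (gmul a (B0 a)).

Lemma B_morE (a : G) (p : H) :
  B_mor Phi B1 B0 (a, p) = (B0 a, Phi (B0 a) (B1 (Phi (twist a) p))).
Proof. unfold B_mor, twist; simpl. rewrite invMg; reflexivity. Qed.

Lemma Phi_tV (p q : H) : Phi (ginv (t p)) q = gmul (ginv p) (gmul q p).
Proof. rewrite <- (homV t_hom), Phi_t. group_simpl. reflexivity. Qed.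

Lemma B0_tmul (b : G) (q : H) :
  B0 (gmul (t q) b) = gmul (B0 b) (t (B1 (Phi (twist b) q))).
Proof.
  rewrite t_B1, t_Phi, (rota_baxter_mulr B0_rb). unfold twist.
  f_equal. f_equal. group_simpl. reflexivity.
Qed.

Lemma B_mor_tgt (a : G) (p : H) :
  gmul (t (Phi (B0 a) (B1 (Phi (twist a) p)))) (B0 a) = B0 (gmul (t p) a).
Proof. rewrite t_Phi, B0_tmul. group_simpl. reflexivity. Qed.

Lemma B_mor_id (a : G) :
  Phi (B0 a) (B1 (Phi (twist a) gone)) = gone.
Proof. rewrite (hom1 (Phi_hom _)), (rota_baxter1 B1_rb), (hom1 (Phi_hom _)). reflexivity. Qed.

Lemma B_mor_mul (b : G) (p q : H) :
  Phi (B0 b) (B1 (Phi (twist b) (gmul p q)))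
  = gmul (Phi (B0 (gmul (t q) b)) (B1 (Phi (twist (gmul (t q) b)) p)))
         (Phi (B0 b) (B1 (Phi (twist b) q))).
Proof.
  set (q' := Phi (twist b) q).
  assert (twist_tmul : twist (gmul (t q) b)
    = gmul (ginv (t (B1 q'))) (gmul (twist b) (ginv (t q)))).
  { unfold twist at 1. rewrite B0_tmul. fold q'. unfold twist. group_simpl. reflexivity. }
  rewrite twist_tmul, B0_tmul. fold q'.
  rewrite !PhiM, Phi_t, !Phi_tV, !(Phi_hom (twist b)), (homV (Phi_hom _)).
  fold q'. rewrite <- (Phi_hom (B0 b)). f_equal.
  rewrite (rota_baxter_mulr B1_rb q'). group_simpl. reflexivity.
Qed.

End CrossedModuleRotaBaxter.

Theorem mainTheorem6 (H G : group) (t : H -> G) (Phi : G -> H -> H)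
  (B1 : H -> H) (B0 : G -> G) :
  crossed_module t Phi ->
  rota_baxter_cm t Phi B1 B0 ->
  is_functor_C t B0 (B_mor Phi B1 B0).
Proof.
  intros [t_hom [Phi_aut [PhiM [_ [Phi_t t_Phi]]]]] [B1_rb [B0_rb [t_B1 _]]].
  assert (Phi_hom : forall a, is_hom (Phi a)) by (intro a; apply Phi_aut).
  unfold is_functor_C, cat_src, cat_tgt, cat_id, cat_composable, cat_comp.
  split; [| split; [| split]].
  - intros [a p]. rewrite B_morE. reflexivity.
  - intros [a p]. rewrite B_morE. apply B_mor_tgt; assumption.
  - intro a. rewrite B_morE, B_mor_id; trivial.
  - intros [a p] [b q] composable; simpl in composable. subst a.
    rewrite !B_morE; simpl. split.
    + apply B_mor_tgt; assumption.
    + f_equal. apply B_mor_mul; assumption.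
Qed.
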